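(* For every $d$-dimensional state $\rho$ and every maximally coherent state $|\Psi_d\rangle=d^{-1/2}\sum_{j=1}^de^{i\theta_j}|j\rangle$ ($\theta_j\in\mathbb R$), \[ \mu_d(\rho)\ge\log d+\log\langle\Psi_d|\rho|\Psi_d\rangle . \]
   Context: Fixed computational basis; $\Delta$ the dephasing map (deleting off-diagonal entries); logs base 2. $R^\rho=\Delta(\rho)^{-1/2}\rho\Delta(\rho)^{-1/2}$ (inverse on the support) and $\mu_k(\rho)=\max_{I\subseteq[d],|I|\le k}\log\|\Pi_IR^\rho\Pi_I\|_\infty$ with $\Pi_I=\sum_{i\in I}|i\rangle\langle i|$; in particular $\mu_d(\rho)=\log\|R^\rho\|_\infty$. *)

From HB Require Import structures.
From mathcomp Require Import all_boot all_order all_algebra.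
From mathcomp Require Import complex.
From mathcomp Require Import all_classical all_reals.
From mathcomp Require Import exp trigo.
Set Implicit Arguments. Unset Strict Implicit. Unset Printing Implicit Defensive.
Import Order.TTheory GRing.Theory Num.Theory.
Local Open Scope ring_scope.
Local Open Scope classical_set_scope.

Section QDefs.
Variable R : realType.
Local Notation C := R[i].

Definition adj {m n : nat} (A : 'M[C]_(m, n)) : 'M[C]_(n, m) :=
  (map_mx (fun z : C => (complex.Re z -i* complex.Im z)%C) A)^T.

Definition is_state {d : nat} (rho : 'M[C]_d) : Prop :=
  adj rho = rho /\
  (forall v : 'cV[C]_d, 0 <= complex.Re ((adj v *m rho *m v) 0 0) /\
                        complex.Im ((adj v *m rho *m v) 0 0) = 0) /\
  \tr rho = 1.

Definition dephase {d : nat} (rho : 'M[C]_d) : 'M[C]_d :=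
  diag_mx (\row_i rho i i).

(* Delta(rho)^{-1/2}, inverse taken on the support *)
Definition dephase_invsqrt {d : nat} (rho : 'M[C]_d) : 'M[C]_d :=
  diag_mx (\row_i (let r := complex.Re (dephase rho i i) in
                    if 0 < r then ((Num.sqrt r)^-1)%:C%C else 0)).

Definition Rmat {d : nat} (rho : 'M[C]_d) : 'M[C]_d :=
  dephase_invsqrt rho *m rho *m dephase_invsqrt rho.

Definition vnorm {d : nat} (v : 'cV[C]_d) : R :=
  Num.sqrt (\sum_i (complex.Re (v i 0) ^+ 2 + complex.Im (v i 0) ^+ 2)).

Definition opnorm {d : nat} (A : 'M[C]_d) : R :=
  sup [set r : R | exists v : 'cV[C]_d, vnorm v = 1 /\ r = vnorm (A *m v)].

Definition log2 (x : R) : R := ln x / ln 2.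

Definition Pi_mx {d : nat} (I : {set 'I_d}) : 'M[C]_d :=
  diag_mx (\row_i (if i \in I then 1 else 0)).

Definition mu_k {d : nat} (k : nat) (rho : 'M[C]_d) : R :=
  \big[Num.max/log2 (opnorm (Pi_mx (@finset.set0 _) *m Rmat rho *m Pi_mx (@finset.set0 _)))]_(I : {set 'I_d} | (#|I| <= k)%N)
     log2 (opnorm (Pi_mx I *m Rmat rho *m Pi_mx I)).

Definition max_coh {d : nat} (theta : 'I_d -> R) : 'cV[C]_d :=
  \col_j (((Num.sqrt (d%:R))^-1 * cos (theta j)) +i* ((Num.sqrt (d%:R))^-1 * sin (theta j)))%C.

(* <psi| rho |psi> (real part; it is real for Hermitian rho) *)
Definition expect {d : nat} (psi : 'cV[C]_d) (rho : 'M[C]_d) : R :=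
  complex.Re ((adj psi *m rho *m psi) 0 0).

End QDefs.

From HB Require Import structures.
From mathcomp Require Import all_boot all_order all_algebra.
From mathcomp Require Import complex.
From mathcomp Require Import all_classical all_reals.
From mathcomp Require Import exp trigo.
From mathcomp Require Import ring lra.
Import Order.TTheory GRing.Theory Num.Theory.
Import ComplexField.Normc.

Set Implicit Arguments. Unset Strict Implicit. Unset Printing Implicit Defensive.
Local Open Scope ring_scope.

(* With p_k := rho_kk, every entry factors as rho_kl = sqrt p_k * R_kl * sqrt p_l:
   off the support of the dephased state this holds because positivity forces
   the whole row of rho to vanish when p_k = 0.  Hence
   d <Psi|rho|Psi> = <u|R^rho|u> for u_k = sqrt p_k e^(i theta_k), a unit vector
   since tr rho = 1, and Cauchy-Schwarz bounds <u|R^rho|u> by ||R^rho||_oo,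
   whose logarithm is mu_d(rho) (take I = [d]). *)

Section ComplexFacts.
Variable R : rcfType.
Implicit Types (x y u z : R[i]) (r : R).

Lemma Re_sum (I : Type) (s : seq I) (P : pred I) (F : I -> R[i]) :
  complex.Re (\sum_(i <- s | P i) F i) = \sum_(i <- s | P i) complex.Re (F i).
Proof. exact: (@raddf_sum _ _ (@complex.Re R : Rcomplex R -> R)). Qed.

Lemma ReM x y :
  complex.Re (x * y) = complex.Re x * complex.Re y - complex.Im x * complex.Im y.
Proof. by case: x; case: y. Qed.

Lemma Re_realM r z : complex.Re (r%:C * z)%C = r * complex.Re z.
Proof. by rewrite ReM /= mul0r subr0. Qed.

Lemma conjcM x y : (x * y)^*%C = x^*%C * y^*%C.
Proof. exact: rmorphM. Qed.

Lemma normc_sqr z : normc z ^+ 2 = complex.Re z ^+ 2 + complex.Im z ^+ 2.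
Proof. by case: z => a b; rewrite /= sqr_sqrtr // addr_ge0 ?sqr_ge0. Qed.

Lemma normc_sum (I : Type) (s : seq I) (F : I -> R[i]) :
  normc (\sum_(i <- s) F i) <= \sum_(i <- s) normc (F i).
Proof. exact: (@ler_norm_sum _ (Rcomplex R)). Qed.

Lemma normc_ge0 z : 0 <= normc z.
Proof. by case: z => a b; exact: sqrtr_ge0. Qed.

Lemma Re_conjM_le r u x :
  (r * complex.Re (u^* * x)%C) *+ 2 <= r ^+ 2 * normc u ^+ 2 + normc x ^+ 2.
Proof.
rewrite !normc_sqr ReM; case: u x => [a b] [c e] /=.
have := sqr_ge0 (r * a - c); have := sqr_ge0 (r * b - e); rewrite mulr2n; nra.
Qed.

End ComplexFacts.

Section Vectors.
Variable R : realType.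
Local Notation C := R[i].

Lemma adjE m n (A : 'M[C]_(m, n)) i j : adj A i j = (A j i)^*%C.
Proof. by rewrite /adj !mxE; case: (A j i). Qed.

Lemma adjD m n (A B : 'M[C]_(m, n)) : adj (A + B) = adj A + adj B.
Proof. by apply/matrixP => i j; rewrite !(adjE, mxE) rmorphD. Qed.

Lemma adjZ m n c (A : 'M[C]_(m, n)) : adj (c *: A) = c^*%C *: adj A.
Proof. by apply/matrixP => i j; rewrite !(adjE, mxE) rmorphM. Qed.

Lemma adj_mulmxE n (u v : 'cV[C]_n) : (adj u *m v) 0 0 = \sum_i (u i 0)^*%C * v i 0.
Proof. by rewrite mxE; apply: eq_bigr => i _; rewrite adjE. Qed.

Lemma quad_formE n (A : 'M[C]_n) (v : 'cV[C]_n) :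
  (adj v *m A *m v) 0 0 = \sum_k \sum_l (v k 0)^*%C * A k l * v l 0.
Proof.
rewrite -mulmxA adj_mulmxE; apply: eq_bigr => k _.
by rewrite mxE mulr_sumr; apply: eq_bigr => l _; rewrite mulrA.
Qed.

Lemma quad_form_delta n (A : 'M[C]_n) k l :
  (adj (delta_mx k 0 : 'cV[C]_n) *m A *m (delta_mx l 0 : 'cV[C]_n)) 0 0 = A k l.
Proof.
have -> : adj (delta_mx k 0 : 'cV[C]_n) = delta_mx 0 k.
  by apply/matrixP => i j; rewrite adjE !mxE rmorph_nat andbC.
by rewrite -rowE -colE !mxE.
Qed.

Lemma quad_form_pair n (A : 'M[C]_n) (c : C) (i j : 'I_n) :
  let v : 'cV[C]_n := c *: delta_mx i 0 + delta_mx j 0 in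
  (adj v *m A *m v) 0 0 = c^*%C * c * A i i + c^*%C * A i j + c * A j i + A j j.
Proof.
rewrite /= -trace_mx11 adjD adjZ !mulmxDl !mulmxDr -!scalemxAl -!scalemxAr.
by rewrite !mxtraceD !mxtraceZ !trace_mx11 !quad_form_delta !mulrA !addrA.
Qed.

Lemma vnormE n (v : 'cV[C]_n) : vnorm v = Num.sqrt (\sum_i normc (v i 0) ^+ 2).
Proof. by congr Num.sqrt; apply: eq_bigr => i _; rewrite normc_sqr. Qed.

Lemma vnorm1E n (v : 'cV[C]_n) : vnorm v = 1 -> \sum_i normc (v i 0) ^+ 2 = 1.
Proof.
rewrite vnormE => v1; rewrite -[LHS]sqr_sqrtr ?v1 ?expr1n //.
by apply: sumr_ge0 => i _; exact: sqr_ge0.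
Qed.

Lemma Re_adj_mulmx_le_vnorm n (u x : 'cV[C]_n) :
  vnorm u = 1 -> complex.Re ((adj u *m x) 0 0) <= vnorm x.
Proof.
move=> /vnorm1E u1; rewrite adj_mulmxE Re_sum; set s := \sum_i _.
have [s_le0|s_gt0] := lerP s 0; first by apply: le_trans s_le0 _; exact: sqrtr_ge0.
have amgm : (s * s) *+ 2 <=
    s ^+ 2 * \sum_i normc (u i 0) ^+ 2 + \sum_i normc (x i 0) ^+ 2.
  rewrite {2}/s mulr_sumr -sumrMnl mulr_sumr -big_split /=.
  by apply: ler_sum => i _; exact: Re_conjM_le.
rewrite u1 mulr1 in amgm.
rewrite vnormE -(ger0_norm (ltW s_gt0)) -sqrtr_sqr ler_sqrt; last first.
  by apply: sumr_ge0 => i _; exact: sqr_ge0.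
rewrite expr2; nra.
Qed.

Lemma vnorm_mulmx_le_opnorm n (A : 'M[C]_n) (v : 'cV[C]_n) :
  vnorm v = 1 -> vnorm (A *m v) <= opnorm A.
Proof.
move=> v1; apply: ub_le_sup; last by exists v.
exists (Num.sqrt (\sum_i (\sum_j normc (A i j)) ^+ 2)) => _ [w [/vnorm1E w1 ->]].
have w_le1 j : normc (w j 0) <= 1.
  rewrite -(ler_pXn2r (isT : (0 < 2)%N)) ?nnegrE ?normc_ge0 // expr1n -w1.
  by rewrite (bigD1 j) //= lerDl; apply: sumr_ge0 => i _; exact: sqr_ge0.
rewrite vnormE ler_sqrt; last by apply: sumr_ge0 => i _; exact: sqr_ge0.
apply: ler_sum => i _.
have row_le : normc ((A *m w) i 0) <= \sum_j normc (A i j).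
  rewrite mxE; apply: le_trans (normc_sum _ _) _; apply: ler_sum => j _.
  by rewrite normcM ler_piMr ?normc_ge0.
by rewrite !expr2 ler_pM ?normc_ge0.
Qed.

Lemma Re_quad_form_le_opnorm n (A : 'M[C]_n) (u : 'cV[C]_n) :
  vnorm u = 1 -> complex.Re ((adj u *m A *m u) 0 0) <= opnorm A.
Proof.
move=> u1; rewrite -mulmxA; apply: le_trans (Re_adj_mulmx_le_vnorm _ u1) _.
exact: vnorm_mulmx_le_opnorm.
Qed.

End Vectors.

Definition expi (R : realType) (t : R) : R[i] := (cos t +i* sin t)%C.

Lemma normc_expi (R : realType) (t : R) : normc (expi t) = 1.
Proof. by rewrite /= cos2Dsin2 sqrtr1. Qed.

Lemma max_cohE (R : realType) d (theta : 'I_d -> R) k :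
  max_coh theta k 0 = ((Num.sqrt d%:R)^-1)%:C%C * expi (theta k).
Proof. by rewrite mxE; apply/eqP; rewrite eq_complex /= !mul0r subr0 addr0 !eqxx. Qed.

Lemma Rmat_entry (R : realType) d (rho : 'M[R[i]]_d) k l :
  Rmat rho k l = dephase_invsqrt rho k k * rho k l * dephase_invsqrt rho l l.
Proof. by rewrite /Rmat /dephase_invsqrt mul_diag_mx mul_mx_diag !mxE !eqxx !mulr1n. Qed.

Lemma dephase_invsqrtE (R : realType) d (rho : 'M[R[i]]_d) k :
  dephase_invsqrt rho k k =
  if 0 < complex.Re (rho k k) then ((Num.sqrt (complex.Re (rho k k)))^-1)%:C%C else 0.
Proof. by rewrite !mxE !eqxx !mulr1n. Qed.

Section State.
Variables (R : realType) (d : nat) (rho : 'M[R[i]]_d).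
Hypothesis rho_state : is_state rho.
Local Notation p k := (complex.Re (rho k k)).

Lemma state_conj_entry i j : rho j i = (rho i j)^*%C.
Proof. by case: rho_state => + _ => {1}<-; rewrite adjE. Qed.

Lemma state_diag_ge0 i : 0 <= p i.
Proof.
by case: rho_state => _ [/(_ (delta_mx i 0)) + _]; rewrite quad_form_delta => -[].
Qed.

Lemma state_diag_real i : complex.Im (rho i i) = 0.
Proof.
by case: rho_state => _ [/(_ (delta_mx i 0)) + _]; rewrite quad_form_delta => -[].
Qed.

Lemma state_diag_sum : \sum_i p i = 1.
Proof. by case: rho_state => _ [_]; rewrite /mxtrace => tr1; rewrite -Re_sum tr1. Qed.

Lemma state_dim_gt0 : (0 < d)%N.
Proof.
have := state_diag_sum; case: d rho => [|//] rho0.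
by rewrite big_ord0 => /eqP; rewrite eq_sym oner_eq0.
Qed.

(* Testing positivity on [c e_i + e_j] with [c = -t rho_ij] gives
   [0 <= p j - 2 t |rho_ij|^2] for every real [t]. *)
Lemma state_row_eq0 i j : p i = 0 -> rho i j = 0.
Proof.
move=> pi0.
have rho_ii : rho i i = 0.
  by move: pi0 (state_diag_real i); case: (rho i i) => a b /= -> ->.
have bound t : 0 <= p j - (t * normc (rho i j) ^+ 2) *+ 2.
  case: rho_state => _ [/(_ ((- t%:C * rho i j)%C *: delta_mx i 0 + delta_mx j 0)) [+ _] _].
  rewrite quad_form_pair rho_ii mulr0 add0r (state_conj_entry i j) normc_sqr.
  by case: (rho i j) (rho j j) => a b [c e] /=; congr (0 <= _); ring.
suff : normc (rho i j) ^+ 2 == 0 by rewrite sqrf_eq0 => /eqP/eq0_normc.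
rewrite eq_le sqr_ge0 andbT leNgt; apply/negP => n_gt0.
have := bound ((p j + 1) / normc (rho i j) ^+ 2).
have := state_diag_ge0 j; rewrite mulfVK ?gt_eqF // mulr2n; lra.
Qed.

Lemma state_entry_factor k l :
  rho k l = (Num.sqrt (p k))%:C%C * Rmat rho k l * (Num.sqrt (p l))%:C%C.
Proof.
rewrite Rmat_entry !dephase_invsqrtE.
have [pk_gt0|pk_le0] := ltrP 0 (p k); last first.
  have pk0 : p k = 0 by apply/le_anti; rewrite pk_le0 state_diag_ge0.
  by rewrite state_row_eq0 // pk0 sqrtr0 !mul0r.
have [pl_gt0|pl_le0] := ltrP 0 (p l); last first.
  have pl0 : p l = 0 by apply/le_anti; rewrite pl_le0 state_diag_ge0.
  by rewrite (state_conj_entry l k) state_row_eq0 // conjc0 pl0 sqrtr0 !mulr0.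
rewrite !mulrA -rmorphM divff ?sqrtr_eq0 -?ltNge // mul1r.
by rewrite -mulrA -rmorphM mulVf ?sqrtr_eq0 -?ltNge // mulr1.
Qed.

Definition dephase_sqrt_coh (theta : 'I_d -> R) : 'cV[R[i]]_d :=
  \col_k ((Num.sqrt (p k))%:C%C * expi (theta k)).

Lemma dephase_sqrt_cohE theta k :
  dephase_sqrt_coh theta k 0 = (Num.sqrt (p k))%:C%C * expi (theta k).
Proof. by rewrite mxE. Qed.

Lemma vnorm_dephase_sqrt_coh theta : vnorm (dephase_sqrt_coh theta) = 1.
Proof.
rewrite vnormE -sqrtr1 -state_diag_sum; congr Num.sqrt; apply: eq_bigr => k _.
rewrite dephase_sqrt_cohE normcM normc_expi mulr1 /= expr0n addr0 sqrtr_sqr.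
by rewrite ger0_norm ?sqr_sqrtr ?sqrtr_ge0 ?state_diag_ge0.
Qed.

Lemma expect_max_coh_Rmat theta :
  expect (max_coh theta) rho * d%:R =
  complex.Re ((adj (dephase_sqrt_coh theta) *m Rmat rho *m dephase_sqrt_coh theta) 0 0).
Proof.
pose a := (Num.sqrt d%:R)^-1 : R.
rewrite /expect.
have -> : (adj (max_coh theta) *m rho *m max_coh theta) 0 0 =
    (a * a)%:C%C * (adj (dephase_sqrt_coh theta) *m Rmat rho *m dephase_sqrt_coh theta) 0 0.
  rewrite !quad_formE mulr_sumr; apply: eq_bigr => k _; rewrite mulr_sumr.
  apply: eq_bigr => l _; rewrite state_entry_factor !max_cohE !dephase_sqrt_cohE.
  by rewrite !conjcM !conjc_real rmorphM; ring.
rewrite Re_realM -mulrA mulrC -mulrA.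
rewrite /a -expr2 exprVn sqr_sqrtr ?ler0n // divff ?mulr1 //.
by rewrite pnatr_eq0 -lt0n state_dim_gt0.
Qed.

End State.

Lemma log2M (R : realType) (x y : R) :
  0 < x -> 0 < y -> log2 (x * y) = log2 x + log2 y.
Proof. by move=> x_gt0 y_gt0; rewrite /log2 lnM // mulrDl. Qed.

Lemma ler_log2 (R : realType) (x y : R) :
  0 < x -> 0 < y -> (log2 x <= log2 y) = (x <= y).
Proof. by move=> x_gt0 y_gt0; rewrite /log2 ler_pM2r ?invr_gt0 ?ln_gt0 ?ltr1n // ler_ln. Qed.

Lemma Pi_mx_setT (R : realType) d : Pi_mx R (finset.setT : {set 'I_d}) = 1%:M.
Proof. by apply/matrixP => i j; rewrite !mxE finset.in_setT. Qed.

Lemma log2_opnorm_Rmat_le_mu (R : realType) d (rho : 'M[R[i]]_d) :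
  log2 (opnorm (Rmat rho)) <= mu_k d rho.
Proof.
rewrite -[Rmat rho]mul1mx -[_ *m _]mulmx1 -Pi_mx_setT.
apply: (le_bigmax_cond _ (P := fun I : {set 'I_d} => #|I| <= d)%N).
by rewrite finset.cardsT card_ord.
Qed.

Theorem lemma4 (R : realType) (d : nat) (rho : 'M[R[i]]_d) (theta : 'I_d -> R) :
  is_state rho ->
  0 < expect (max_coh theta) rho ->
  mu_k d rho >= log2 (d%:R) + log2 (expect (max_coh theta) rho).
Proof.
move=> rho_state expect_gt0.
have d_gt0 : 0 < d%:R :> R by rewrite ltr0n (state_dim_gt0 rho_state).
set u := dephase_sqrt_coh rho theta.
have quad_gt0 : 0 < complex.Re ((adj u *m Rmat rho *m u) 0 0).
  by rewrite -expect_max_coh_Rmat // mulr_gt0.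
rewrite addrC -log2M // expect_max_coh_Rmat //.
apply: le_trans (log2_opnorm_Rmat_le_mu rho).
have le_opnorm := Re_quad_form_le_opnorm (Rmat rho)
  (vnorm_dephase_sqrt_coh rho_state theta).
by rewrite ler_log2 // (lt_le_trans quad_gt0 le_opnorm).
Qed.
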